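(* Assume the standing setup. For any distinct $i,j\in[k]$ there exist distinct indices $i_2,\dots,i_d\in[k]$ such that: (1) if $\alpha_i,\alpha_j$ are not proportional, then $\alpha_i,\alpha_j,\alpha_{i_2},\dots,\alpha_{i_d}$ are linearly independent; (2) if $\alpha_i,\alpha_j$ are proportional, then $\alpha_i,\alpha_{i_2},\dots,\alpha_{i_d}$ are linearly independent.
   Context: Standing setup: $\mathbb{F}$ is a field of characteristic $0$; $W$ is a group with finite generating set $S=\{s_1,\dots,s_k\}$. A linear map on a finite-dimensional space is a (generalized) reflection if it is diagonalizable and $s-\operatorname{Id}$ has rank $1$; a reflection vector is a nonzero vector in $\operatorname{Im}(s-\operatorname{Id})$. $(V_1,\rho_1)$ is an irreducible reflection representation of $(W,S)$ (each $s_i$ acts by a reflection) of dimension $n$, and $\alpha_i\in V_1$ is a chosen reflection vector of $s_i$ for each $i\in[k]$. $d$ is an integer with $1\le d\le n-1$. *)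

From HB Require Import structures.
From mathcomp Require Import all_boot all_order all_algebra.
Set Implicit Arguments. Unset Strict Implicit. Unset Printing Implicit Defensive.
Import GRing.Theory.
Local Open Scope ring_scope.

Definition is_group (W : Type) (mul : W -> W -> W) (one : W) (inv : W -> W) : Prop :=
  [/\ forall a b c, mul a (mul b c) = mul (mul a b) c,
      forall a, mul one a = a,
      forall a, mul a one = a,
      forall a, mul (inv a) a = one
    & forall a, mul a (inv a) = one].

Inductive generated (W : Type) (mul : W -> W -> W) (one : W) (inv : W -> W)
    (k : nat) (s : 'I_k -> W) : W -> Prop :=
  | gen_one : generated mul one inv s one
  | gen_gen i : generated mul one inv s (s i)
  | gen_inv w : generated mul one inv s w -> generated mul one inv s (inv w)
  | gen_mul w1 w2 : generated mul one inv s w1 -> generated mul one inv s w2 ->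
                    generated mul one inv s (mul w1 w2).

(* Linear representations on the row space 'rV[F]_n (mathcomp convention:
   vectors are rows, w acts by v |-> v *m rho w). *)
Definition is_rep (F : fieldType) (n : nat) (W : Type) (mul : W -> W -> W) (one : W)
    (rho : W -> 'M[F]_n) : Prop :=
  rho one = 1%:M /\ forall a b, rho (mul a b) = rho a *m rho b.

Definition irreducible_rep (F : fieldType) (n : nat) (W : Type) (rho : W -> 'M[F]_n) : Prop :=
  (0 < n)%N /\
  forall U : 'M[F]_n, (forall w, (U *m rho w <= U)%MS) -> U == 0 \/ row_full U.

Definition is_reflection (F : fieldType) (n : nat) (A : 'M[F]_n) : Prop :=
  diagonalizable A /\ \rank (A - 1%:M) = 1%N.

Definition is_reflection_vector (F : fieldType) (n : nat) (A : 'M[F]_n) (a : 'rV[F]_n) : Prop :=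
  a != 0 /\ (a <= A - 1%:M)%MS.

Definition proportional (F : fieldType) (n : nat) (u v : 'rV[F]_n) : Prop :=
  exists c : F, v = c *: u \/ u = c *: v.

From HB Require Import structures.
From mathcomp Require Import all_boot all_order all_algebra zify.
From Stdlib Require Import Classical.
Set Implicit Arguments. Unset Strict Implicit. Unset Printing Implicit Defensive.
Import GRing.Theory.
Local Open Scope ring_scope.

(* The span of the reflection vectors is stable under every generator, hence
   under the whole group, so by irreducibility the α_i span V.  A free family
   (α_i, or α_i, α_j when they are not proportional) can then be completed one
   vector at a time by some α_l outside its span, as long as its length is
   smaller than n = dim V. *)

Section RowSpaces.

Variable F : fieldType.

Lemma row_free_col_mx_rV m n (A : 'M[F]_(m, n)) (v : 'rV_n) :
  row_free A -> ~~ (v <= A)%MS -> row_free (col_mx A v).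
Proof.
rewrite -!row_leq_rank -addsmxE addn1 => freeA vNA.
apply: leq_ltn_trans freeA (rank_ltmx _).
by rewrite ltmxE addsmxSl addsmx_sub submx_refl.
Qed.

Lemma row_free_col_mx_inj m r n (B : 'M[F]_(m, n)) (f : 'I_r -> 'rV_n) :
  row_free (col_mx B (\matrix_(l < r) f l)) -> injective f.
Proof.
rewrite -row_leq_rank -addsmxE => freeBM.
have /row_free_inj freeM : row_free (\matrix_(l < r) f l).
  rewrite -row_leq_rank -(leq_add2l m); apply: leq_trans freeBM _.
  by apply: leq_trans (mxrank_adds_leqif B _).1 _; rewrite leq_add2r rank_leq_row.
move=> a b fab; have := @freeM 1 (delta_mx 0 a) (delta_mx 0 b).
rewrite -!rowE !rowK fab => /(_ erefl)/matrixP/(_ 0 a).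
by rewrite !mxE !eqxx /=; case: eqP => // _ /eqP; rewrite oner_eq0.
Qed.

Lemma row_full_row_notin k p n (A : 'M[F]_(k, n)) (X : 'M[F]_(p, n)) :
  row_full A -> (\rank X < n)%N -> exists i, ~~ (row i A <= X)%MS.
Proof.
move=> fullA rankX; apply/existsP; apply: contraTT rankX.
rewrite negb_exists -leqNgt => /forallP rowsAX.
have /row_subP AX : forall i, (row i A <= X)%MS by move=> i; apply/negPn.
by rewrite -{1}(eqP fullA); apply: mxrankS.
Qed.

Lemma row_free_completion k n (alpha : 'I_k -> 'rV[F]_n) m (B : 'M[F]_(m, n)) r :
  row_full (\matrix_(i < k) alpha i) -> row_free B -> (m + r <= n)%N ->
  exists t : 'I_r -> 'I_k, row_free (col_mx B (\matrix_(l < r) alpha (t l))).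
Proof.
move=> fullA freeB; elim: r => [|r IHr] le_mrn.
  have t : 'I_0 -> 'I_k by case.
  by exists t; rewrite flatmx0 /row_free -addsmxE addsmx0 addn0.
rewrite addnS in le_mrn; have [t freeX] := IHr (ltnW le_mrn).
set X := col_mx B _ in freeX.
have rankX : (\rank X < n)%N by rewrite (eqP freeX).
have [i] := row_full_row_notin fullA rankX; rewrite rowK => alphaNX.
(* Indexing by ['I_(1 + r)], convertible to ['I_r.+1], makes the new family
   literally [col_mx (alpha i) _]. *)
exists (fun l : 'I_(1 + r) => if split l is inr l' then t l' else i).
have -> : \matrix_(l < 1 + r) alpha (if split l is inr l' then t l' else i)
    = col_mx (alpha i) (\matrix_(l < r) alpha (t l)).
  by apply/matrixP => l c; rewrite !mxE; case: split => [j|l']; rewrite ?ord1 ?mxE.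
have := row_free_col_mx_rV freeX alphaNX.
rewrite /row_free -!addsmxE -(adds_eqmx (addsmxE B _) (eqmx_refl _)).
rewrite -(adds_eqmx (eqmx_refl B) (addsmxE (alpha i) _)).
by rewrite -addsmxA [(_ + alpha i)%MS]addsmxC addn1 addnS.
Qed.

Lemma stablemx_rinv m n (U : 'M[F]_(m, n)) (A B : 'M[F]_n) :
  A *m B = 1%:M -> stablemx U A -> stablemx U B.
Proof.
move=> AB1 stUA.
have [A_unit _] := mulmx1_unit AB1.
have /andP[_ UsubUA] : (U *m A == U)%MS.
  by rewrite -(mxrank_leqif_eq stUA) mxrankMfree ?row_free_unit.
by rewrite -[X in (_ <= X)%MS](mulmx1 U) -AB1 mulmxA submxMr.
Qed.

Lemma stablemx_reflection m n (U : 'M[F]_(m, n)) (A : 'M[F]_n) (a : 'rV_n) :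
  is_reflection A -> is_reflection_vector A a -> (a <= U)%MS -> stablemx U A.
Proof.
move=> [_ rankA1] [a_neq0 a_sub] aU.
have A1_sub_a : (A - 1%:M <= a)%MS.
  by rewrite -(mxrank_leqif_sup a_sub).2 rank_rV a_neq0 rankA1.
rewrite -[A](subrK 1%:M) addrC stablemxD ?stablemxC //.
exact: submx_trans (submxMl _ _) (submx_trans A1_sub_a aU).
Qed.

End RowSpaces.

Section GeneratedStable.

Variables (F : fieldType) (W : Type) (mul : W -> W -> W) (one : W) (inv : W -> W).
Variables (k n : nat) (s : 'I_k -> W) (rho : W -> 'M[F]_n).
Hypotheses (Wgroup : is_group mul one inv) (Sgen : forall w, generated mul one inv s w).
Hypothesis rho_rep : is_rep mul one rho.

Lemma stablemx_generated m (U : 'M[F]_(m, n)) :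
  (forall i, stablemx U (rho (s i))) -> forall w, stablemx U (rho w).
Proof.
case: rho_rep => rho1 rhoM; case: Wgroup => _ _ _ _ mulV stU w.
elim: (Sgen w) => [|i|w' _ stUw'|w1 w2 _ stUw1 _ stUw2].
- by rewrite rho1 mulmx1.
- exact: stU.
- by apply: stablemx_rinv stUw'; rewrite -rhoM mulV rho1.
- by rewrite rhoM stablemxM.
Qed.

Lemma row_full_reflection_vectors (alpha : 'I_k -> 'rV[F]_n) :
  (0 < k)%N -> irreducible_rep rho -> (forall i, is_reflection (rho (s i))) ->
  (forall i, is_reflection_vector (rho (s i)) (alpha i)) ->
  row_full (\matrix_(i < k) alpha i).
Proof.
move=> k_gt0 [_ irr] refl alpha_refl; set A := \matrix_(i < k) alpha i.
have alphaA i : (alpha i <= A)%MS by rewrite -(rowK alpha i) row_sub.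
have stA w : stablemx <<A>>%MS (rho w).
  rewrite (eqmx_stable _ (genmxE A)); apply: stablemx_generated => i.
  exact: stablemx_reflection (refl i) (alpha_refl i) (alphaA i).
have [A0|] := irr _ stA; last by rewrite /row_full mxrank_gen.
have [/negP alpha_neq0 _] := alpha_refl (Ordinal k_gt0).
by case: alpha_neq0; rewrite -submx0 -(eqP A0) genmxE.
Qed.

End GeneratedStable.

Theorem lemma5p8
  (F : fieldType) (Fchar0 : [pchar F] =i pred0)
  (W : Type) (mul : W -> W -> W) (one : W) (inv : W -> W)
  (Wgroup : is_group mul one inv)
  (k : nat) (s : 'I_k -> W) (Sgen : forall w, generated mul one inv s w)
  (n : nat) (rho : W -> 'M[F]_n) (rho_rep : is_rep mul one rho)
  (rho_irr : irreducible_rep rho)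
  (rho_refl : forall i, is_reflection (rho (s i)))
  (alpha : 'I_k -> 'rV[F]_n)
  (alpha_refl : forall i, is_reflection_vector (rho (s i)) (alpha i))
  (d : nat) (d_ge1 : (1 <= d)%N) (d_le : (d <= n - 1)%N) :
  forall i j : 'I_k, i != j ->
  exists t : 'I_(d.-1) -> 'I_k,
    injective t /\
    (~ proportional (alpha i) (alpha j) ->
       row_free (col_mx (col_mx (alpha i) (alpha j)) (\matrix_(l < d.-1) alpha (t l)))) /\
    (proportional (alpha i) (alpha j) ->
       row_free (col_mx (alpha i) (\matrix_(l < d.-1) alpha (t l)))).
Proof.
move=> i j _.
have k_gt0 : (0 < k)%N := leq_ltn_trans (leq0n i) (ltn_ord i).
have fullA :=
  row_full_reflection_vectors Wgroup Sgen rho_rep k_gt0 rho_irr rho_refl alpha_refl.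
have lt_dn : (1 + d.-1 < n)%N by lia.
have free_alpha l : row_free (alpha l) by rewrite /row_free rank_rV; case: (alpha_refl l) => ->.
have [prop_ij | nprop_ij] := classic (proportional (alpha i) (alpha j)).
  have [t free_t] := row_free_completion fullA (free_alpha i) (ltnW lt_dn).
  by exists t; split; [exact: inj_compr (row_free_col_mx_inj free_t) | split].
have free_ij : row_free (col_mx (alpha i) (alpha j)).
  apply: row_free_col_mx_rV (free_alpha i) _; apply: contra_notN nprop_ij => /sub_rVP[c ->].
  by exists c; left.
have [t free_t] := row_free_completion fullA free_ij lt_dn.
by exists t; split; [exact: inj_compr (row_free_col_mx_inj free_t) | split].
Qed.
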